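(* Assume the Bellman setting below and hypotheses (H3) and (H4). Let $U$ be a solution of the Bellman problem. Then there exists a sequence $(P^\ell)_\ell$ in $\mathcal P$ such that $-A(P^\ell)U+y(P^\ell)\to0$ as $\ell\to\infty$ and $A(P^\ell)$ is a nonsingular M-matrix for every $\ell$.
   Context: Bellman setting: Let $M\ge 0$ be an integer and $\mathcal P=\mathcal P_0\times\cdots\times\mathcal P_M$ a product of nonempty sets; write $P=(P_0,\dots,P_M)\in\mathcal P$. Let $A:\mathcal P\to\mathbb R^{(M+1)\times(M+1)}$ and $y:\mathcal P\to\mathbb R^{M+1}$ be row-decoupled: for each $i$, the $i$-th row of $A(P)$ and the $i$-th entry of $y(P)$ depend only on $P_i$. Inequalities between vectors are entrywise and suprema of families of vectors are entrywise. The Bellman problem is to find $U$ with $\sup_{P\in\mathcal P}\{-A(P)U+y(P)\}=0$. Row $i$ of a matrix $(a_{ij})$ is strictly diagonally dominant (s.d.d.) if $|a_{ii}|>\sum_{j\ne i}|a_{ij}|$, weakly diagonally dominant (w.d.d.) if $|a_{ii}|\ge\sum_{j\ne i}|a_{ij}|$; a matrix is w.d.d. if all rows are. A Z-matrix is a real matrix with nonpositive off-diagonal entries; a nonsingular M-matrix is a Z-matrix that is nonsingular with entrywise nonnegative inverse. (H3): for each $P$, $A(P)$ is a w.d.d. Z-matrix with nonnegative diagonal entries, and $[A(P)]_{ii}\le1$ whenever row $i$ of $A(P)$ is not s.d.d. Define $[\hat y(P)]_i=[y(P)]_i$ if row $i$ of $A(P)$ is not s.d.d. and $[\hat y(P)]_i=-\infty$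 otherwise, and the operator $\mathbb M$ on vectors with entries in $[-\infty,\infty)$ by $[\mathbb M X]_i=\sup_{P\in\mathcal P}\{(1-[A(P)]_{ii})X_i-\sum_{j\ne i}[A(P)]_{ij}X_j+[\hat y(P)]_i\}$, with the conventions $0\cdot(-\infty)=0$ and that any sum containing $-\infty$ equals $-\infty$; $\mathbb M^0=I$, $\mathbb M^k=\mathbb M\circ\mathbb M^{k-1}$. (H4): for each $U\in\mathbb R^{M+1}$ and each $i$ there exist integers $0\le m_1<m_2$ with $[\mathbb M^{m_1}U]_i>[\mathbb M^{m_2}U]_i$. *)

From mathcomp Require Import all_boot.
From Stdlib Require Import Reals ClassicalEpsilon.
Set Implicit Arguments.
Unset Strict Implicit.
Open Scope R_scope.

Definition sumI (n : nat) (f : 'I_n -> R) : R :=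
  foldr (fun j acc => f j + acc) 0 (enum 'I_n).

Definition offdiag_abs_sum (n : nat) (a : 'I_n -> 'I_n -> R) (i : 'I_n) : R :=
  sumI (fun j => if j == i then 0 else Rabs (a i j)).

Definition sdd_row (n : nat) (a : 'I_n -> 'I_n -> R) (i : 'I_n) : Prop :=
  Rabs (a i i) > offdiag_abs_sum a i.
Definition wdd_row (n : nat) (a : 'I_n -> 'I_n -> R) (i : 'I_n) : Prop :=
  Rabs (a i i) >= offdiag_abs_sum a i.
Definition wdd_mx (n : nat) (a : 'I_n -> 'I_n -> R) : Prop :=
  forall i, wdd_row a i.

Definition Z_matrix (n : nat) (a : 'I_n -> 'I_n -> R) : Prop :=
  forall i j, i <> j -> a i j <= 0.

Definition mx_mul (n : nat) (a b : 'I_n -> 'I_n -> R) : 'I_n -> 'I_n -> R :=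
  fun i j => sumI (fun k => a i k * b k j).
Definition id_mx (n : nat) : 'I_n -> 'I_n -> R :=
  fun i j => if i == j then 1 else 0.

Definition nonsingular_M_matrix (n : nat) (a : 'I_n -> 'I_n -> R) : Prop :=
  Z_matrix a /\
  exists b : 'I_n -> 'I_n -> R,
    (forall i j, mx_mul a b i j = id_mx i j) /\
    (forall i j, mx_mul b a i j = id_mx i j) /\
    (forall i j, 0 <= b i j).

Definition residual (M : nat) (T : 'I_M.+1 -> Type)
  (A : (forall k, T k) -> 'I_M.+1 -> 'I_M.+1 -> R)
  (y : (forall k, T k) -> 'I_M.+1 -> R) (U : 'I_M.+1 -> R)
  (P : forall k, T k) (i : 'I_M.+1) : R :=
  - sumI (fun j => A P i j * U j) + y P i.

Definition bellman_solution (M : nat) (T : 'I_M.+1 -> Type)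
  (A : (forall k, T k) -> 'I_M.+1 -> 'I_M.+1 -> R)
  (y : (forall k, T k) -> 'I_M.+1 -> R) (U : 'I_M.+1 -> R) : Prop :=
  forall i, is_lub (fun x => exists P, x = residual A y U P i) 0.

Definition row_decoupled (M : nat) (T : 'I_M.+1 -> Type)
  (A : (forall k, T k) -> 'I_M.+1 -> 'I_M.+1 -> R)
  (y : (forall k, T k) -> 'I_M.+1 -> R) : Prop :=
  forall (P Q : forall k, T k) (i : 'I_M.+1),
    P i = Q i -> (forall j, A P i j = A Q i j) /\ y P i = y Q i.

Definition H3 (M : nat) (T : 'I_M.+1 -> Type)
  (A : (forall k, T k) -> 'I_M.+1 -> 'I_M.+1 -> R) : Prop :=
  forall P : forall k, T k,
    Z_matrix (A P) /\ wdd_mx (A P) /\ (forall i, 0 <= A P i i) /\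
    (forall i, ~ sdd_row (A P) i -> A P i i <= 1).

(* ---------- extended reals (with both infinities, for totality) ---------- *)
Inductive ER := ERfin (r : R) | ERpinf | ERminf.

Definition ER_le (x z : ER) : Prop :=
  match x, z with
  | ERminf, _ => True
  | _, ERpinf => True
  | ERfin a, ERfin b => a <= b
  | _, _ => False
  end.
Definition ER_lt (x z : ER) : Prop := ER_le x z /\ x <> z.

(* any sum containing -oo is -oo *)
Definition ER_plus (x z : ER) : ER :=
  match x, z with
  | ERminf, _ => ERminf
  | _, ERminf => ERminf
  | ERpinf, _ => ERpinf
  | _, ERpinf => ERpinf
  | ERfin a, ERfin b => ERfin (a + b)
  end.

(* real scalar times extended real, with 0 * (+-oo) = 0 *)
Definition ER_scal (c : R) (x : ER) : ER :=
  match x with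
  | ERfin a => ERfin (c * a)
  | ERminf => if Req_EM_T c 0 then ERfin 0 else if Rlt_dec 0 c then ERminf else ERpinf
  | ERpinf => if Req_EM_T c 0 then ERfin 0 else if Rlt_dec 0 c then ERpinf else ERminf
  end.

Definition ER_sumI (n : nat) (f : 'I_n -> ER) : ER :=
  foldr (fun j acc => ER_plus (f j) acc) (ERfin 0) (enum 'I_n).

Definition is_sup_ER (S : ER -> Prop) (s : ER) : Prop :=
  (forall z, S z -> ER_le z s) /\
  (forall b, (forall z, S z -> ER_le z b) -> ER_le s b).

Definition ER_sup (S : ER -> Prop) : ER :=
  epsilon (inhabits ERminf) (is_sup_ER S).

(* (1 - a_ii) X_i - sum_{j<>i} a_ij X_j + yhat_i, with yhat_i = -oo on s.d.d. rows *)
Definition Mterm (M : nat) (T : 'I_M.+1 -> Type)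
  (A : (forall k, T k) -> 'I_M.+1 -> 'I_M.+1 -> R)
  (y : (forall k, T k) -> 'I_M.+1 -> R) (X : 'I_M.+1 -> ER)
  (P : forall k, T k) (i : 'I_M.+1) : ER :=
  if Rlt_dec (offdiag_abs_sum (A P) i) (Rabs (A P i i)) then ERminf
  else ER_plus (ER_scal (1 - A P i i) (X i))
         (ER_plus (ER_sumI (fun j => if j == i then ERfin 0
                                     else ER_scal (- A P i j) (X j)))
                  (ERfin (y P i))).

Definition Mop (M : nat) (T : 'I_M.+1 -> Type)
  (A : (forall k, T k) -> 'I_M.+1 -> 'I_M.+1 -> R)
  (y : (forall k, T k) -> 'I_M.+1 -> R) (X : 'I_M.+1 -> ER) : 'I_M.+1 -> ER :=
  fun i => ER_sup (fun z => exists P, z = Mterm A y X P i).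

Definition Miter (M : nat) (T : 'I_M.+1 -> Type)
  (A : (forall k, T k) -> 'I_M.+1 -> 'I_M.+1 -> R)
  (y : (forall k, T k) -> 'I_M.+1 -> R) (k : nat) (X : 'I_M.+1 -> ER) : 'I_M.+1 -> ER :=
  iter k (Mop A y) X.

Definition H4 (M : nat) (T : 'I_M.+1 -> Type)
  (A : (forall k, T k) -> 'I_M.+1 -> 'I_M.+1 -> R)
  (y : (forall k, T k) -> 'I_M.+1 -> R) : Prop :=
  forall (U : 'I_M.+1 -> R) (i : 'I_M.+1),
    exists m1 m2 : nat, (m1 < m2)%nat /\
      ER_lt (Miter A y m2 (fun j => ERfin (U j)) i)
            (Miter A y m1 (fun j => ERfin (U j)) i).

(** The residual of a Bellman solution has supremum 0 in every row, so one can
    pick policies whose residuals tend to 0; the point is to keep their matrices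
    nonsingular.  Let [lv i] be the least [k] with [(M^k U)_i < U_i], which exists
    by (H4) since [M^k U <= U].  If a policy is nearly optimal in a row [i] that is
    not strictly diagonally dominant, then that row must have a nonzero entry in a
    column [j] with [lv j < lv i]: otherwise [M^(lv i - 1) U] agrees with [U] on
    every column the row sees, and [U_i + residual] is bounded by
    [(M^(lv i) U)_i < U_i].  Choosing, row by row, policies that are close enough
    to optimal (and gluing them by row-decoupling) therefore yields matrices that
    are weakly chained diagonally dominant, with [lv] as a chain-length function,
    and such Z-matrices satisfy a discrete maximum principle, which makes them
    nonsingular M-matrices. *)
From mathcomp Require Import all_boot all_order all_algebra.
From mathcomp Require Import Rstruct.
From Stdlib Require Import Reals ClassicalEpsilon Classical FunctionalExtensionality.
From Stdlib Require Import Lra Lia.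
Import Order.TTheory GRing.Theory Num.Theory.
Open Scope R_scope.
Set Implicit Arguments.
Unset Strict Implicit.

Section SumI.
Variable n : nat.
Implicit Types f g : 'I_n -> R.

Lemma sumI_big f : sumI f = \big[Rplus/0]_j f j.
Proof.
rewrite /sumI -big_enum /=.
by elim: (enum 'I_n) => [|x s IH]; rewrite ?big_nil ?big_cons //= IH.
Qed.

Lemma sumI_ext f g : (forall j, f j = g j) -> sumI f = sumI g.
Proof. move=> fg; rewrite !sumI_big; exact: eq_bigr. Qed.

Lemma sumI_plus f g : sumI (fun j => f j + g j) = sumI f + sumI g.
Proof. rewrite !sumI_big; exact: big_split. Qed.

Lemma sumI_opp f : sumI (fun j => - f j) = - sumI f.
Proof. rewrite !sumI_big; exact: sumrN. Qed.

Lemma sumI_scal c f : sumI (fun j => c * f j) = c * sumI f.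
Proof. rewrite !sumI_big; symmetry; exact: mulr_sumr. Qed.

Lemma sumI_ge0 f : (forall j, 0 <= f j) -> 0 <= sumI f.
Proof. move=> f_ge0; rewrite sumI_big; apply/RleP/sumr_ge0 => j _; exact/RleP. Qed.

Lemma sumI_eq0 f : (forall j, 0 <= f j) -> sumI f = 0 -> forall j, f j = 0.
Proof.
move=> f_ge0; rewrite sumI_big => /psumr_eq0P f0 j.
by apply: f0 => // k _; apply/RleP.
Qed.

Lemma sumI_split f i :
  sumI f = f i + sumI (fun j => if j == i then 0 else f j).
Proof.
rewrite !sumI_big (bigD1 i) //= big_mkcond /=.
by congr (_ + _); apply: eq_bigr => j _; case: (j == i).
Qed.

End SumI.

Lemma exists_argmin n (x : 'I_n -> R) (i0 : 'I_n) : exists m, forall j, x m <= x j.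
Proof.
case: (@arg_minP _ R _ i0 xpredT x) => // m _ min_m.
by exists m => j; apply/RleP/min_m.
Qed.

Section MatrixOf.
Local Open Scope ring_scope.
Definition mx_of n (a : 'I_n -> 'I_n -> R) : 'M[R]_n := \matrix_(i, j) a i j.
End MatrixOf.

Lemma mx_ofE n (a : 'I_n -> 'I_n -> R) i j : mx_of a i j = a i j.
Proof. exact: mxE. Qed.

Lemma mx_mulE n (a b : 'I_n -> 'I_n -> R) i j :
  mx_mul a b i j = mulmx (mx_of a) (mx_of b) i j.
Proof. rewrite mxE /mx_mul sumI_big; apply: eq_bigr => k _; by rewrite !mx_ofE. Qed.

Lemma id_mxE n (i j : 'I_n) : id_mx i j = (scalar_mx 1 : 'M[R]_n) i j.
Proof. by rewrite mxE /id_mx; case: (i == j). Qed.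

Lemma M_matrix_of_max_principle n (a : 'I_n -> 'I_n -> R) :
  Z_matrix a ->
  (forall x, (forall i, 0 <= sumI (fun j => a i j * x j)) -> forall i, 0 <= x i) ->
  nonsingular_M_matrix a.
Proof.
move=> Za max_principle; split=> //.
pose Am := mx_of a.
have ker0 x : (forall i, sumI (fun j => a i j * x j) = 0) -> forall i, x i = 0.
  move=> ax0 i; apply: Rle_antisym; last by apply: max_principle => k; rewrite ax0; lra.
  suff : 0 <= - x i by lra.
  apply: (max_principle (fun j => - x j)) => k.
  rewrite (sumI_ext (g := fun j => - (a k j * x j))) => [|j]; last ring.
  rewrite sumI_opp ax0; lra.
have Am_unit : Am \in unitmx.
  rewrite unitmxE unitfE -det_tr; apply/negP => /det0P [v v_neq0 vA0].
  move/negP: v_neq0; apply; apply/eqP/rowP => j; rewrite mxE.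
  apply: (ker0 (fun j => v ord0 j)) => i; rewrite sumI_big.
  transitivity (mulmx v (trmx Am) ord0 i); last by rewrite vA0 mxE.
  rewrite mxE; apply: eq_bigr => k _; rewrite !mxE; exact: Rmult_comm.
pose B := invmx Am.
have BE : mx_of B = B by apply/matrixP => i j; rewrite mxE.
have AB1 i j : mx_mul a B i j = id_mx i j by rewrite mx_mulE BE mulmxV // id_mxE.
exists B; split=> [//|]; split=> [i j|i j].
  by rewrite mx_mulE BE -/Am mulVmx // id_mxE.
apply: (max_principle (fun k => B k j)) => k; rewrite -/(mx_mul a B k j) AB1 /id_mx.
case: (k == j); lra.
Qed.

(* [lv] ranks the rows so that each row that is not strictly diagonally dominant
   reaches a row of lower rank through a nonzero entry.  For a w.d.d. matrix such
   a rank exists exactly when it is weakly chained diagonally dominant. *)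
Definition sdd_chain n (a : 'I_n -> 'I_n -> R) (lv : 'I_n -> nat) : Prop :=
  forall i, sdd_row a i \/ exists2 j, a i j <> 0 & (lv j < lv i)%nat.

Section MaximumPrinciple.
Variables (n : nat) (a : 'I_n -> 'I_n -> R).
Hypotheses (Za : Z_matrix a) (wdd_a : wdd_mx a) (diag_ge0 : forall i, 0 <= a i i).

Lemma row_at_negative_min (x : 'I_n -> R) i :
  (forall j, x i <= x j) -> x i < 0 -> 0 <= sumI (fun j => a i j * x j) ->
  ~ sdd_row a i /\ forall j, a i j <> 0 -> x j = x i.
Proof.
move=> min_i neg_i ax_ge0.
(* [(a x)_i] splits into two nonpositive parts, which must therefore vanish. *)
pose d j := if j == i then 0 else - a i j * (x j - x i).
have d_ge0 j : 0 <= d j.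
  rewrite /d; case: eqP => [_|ji]; first lra.
  by apply: Rmult_le_pos; [have := Za (not_eq_sym ji) | have := min_i j]; lra.
have ax_eq : sumI (fun j => a i j * x j) =
             x i * (a i i - offdiag_abs_sum a i) - sumI d.
  rewrite (sumI_split _ i) /offdiag_abs_sum.
  rewrite (sumI_ext (g := fun j => - x i * (if j == i then 0 else Rabs (a i j)) + - d j)).
    rewrite sumI_plus sumI_scal sumI_opp; ring.
  move=> j; rewrite /d; case: eqP => [_|ji]; first ring.
  rewrite Rabs_left1; [ring | exact: Za (not_eq_sym ji)].
have dom_i : 0 <= a i i - offdiag_abs_sum a i.
  by have := wdd_a i; rewrite /wdd_row Rabs_pos_eq //; lra.
have xdom_le0 : x i * (a i i - offdiag_abs_sum a i) <= 0 by nra.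
have d_sum_ge0 := sumI_ge0 d_ge0.
split.
- by rewrite /sdd_row Rabs_pos_eq // => sdd_i; nra.
- move=> j aij_neq0; have d_sum0 : sumI d = 0 by lra.
  have := sumI_eq0 d_ge0 d_sum0 j; rewrite /d.
  by case: eqP => [-> //|_ /Rmult_integral [|]]; lra.
Qed.

(* Among the rows where a negative minimum of [x] is attained, none can have
   least level. *)
Lemma chain_max_principle lv : sdd_chain a lv ->
  forall x, (forall i, 0 <= sumI (fun j => a i j * x j)) -> forall i, 0 <= x i.
Proof.
move=> chain x ax_ge0 i0; apply: Rnot_lt_le => neg_i0.
have [m min_m] := exists_argmin x i0.
have neg_m : x m < 0 by have := min_m i0; lra.
suff : forall i, x i = x m -> False by apply.
elim/(well_founded_induction (Wf_nat.well_founded_ltof _ lv)) => i IH xi_min.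
have min_i j : x i <= x j by rewrite xi_min.
have [not_sdd same] := row_at_negative_min min_i ltac:(lra) (ax_ge0 i).
case: (chain i) => [//|[j aij_neq0 /ssrnat.ltP lt_ji]].
by apply: (IH j lt_ji); rewrite same.
Qed.

Lemma chain_M_matrix lv : sdd_chain a lv -> nonsingular_M_matrix a.
Proof.
by move=> chain; apply: M_matrix_of_max_principle => //; apply: chain_max_principle chain.
Qed.

End MaximumPrinciple.

Lemma ER_sup_ex (S : ER -> Prop) : exists s, is_sup_ER S s.
Proof.
have [unbounded|] := classic (S ERpinf \/ forall r, exists2 a, S (ERfin a) & r < a).
  exists ERpinf; split=> [[]//|b ub].
  case: unbounded => [/ub //|unb]; case: b ub => [r||] ub //=.
  - by have [a /ub /= Sa ra] := unb r; lra.
  - by have [a /ub] := unb 0.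
move=> /not_or_and [no_pinf /not_all_ex_not [r /= bounded]].
have ub_r a : S (ERfin a) -> a <= r.
  by move=> Sa; apply: Rnot_lt_le => ra; apply: bounded; exists a.
have [[a0 Sa0]|no_fin] := classic (exists a, S (ERfin a)).
  have [l [ub_l least_l]] := completeness (fun a => S (ERfin a)) (ex_intro _ r ub_r)
                                          (ex_intro _ a0 Sa0).
  exists (ERfin l); split=> [[a||] Sa //=|[b||] ub //=]; first exact: ub_l.
  - by apply: least_l => a /ub.
  - exact: ub _ Sa0.
exists ERminf; split=> [[a||] Sa //=|//].
by apply: no_fin; exists a.
Qed.

Lemma ER_sup_spec S : is_sup_ER S (ER_sup S).
Proof. exact: epsilon_spec (ER_sup_ex S). Qed.

Lemma ER_le_refl x : ER_le x x.
Proof. case: x => //= r; lra. Qed.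

Lemma ER_le_trans x z w : ER_le x z -> ER_le z w -> ER_le x w.
Proof. case: x => [a||]; case: z => [b||]; case: w => [c||] //=; lra. Qed.

Lemma ER_lt_nle x z : ER_lt x z <-> ~ ER_le z x.
Proof.
rewrite /ER_lt; case: x => [a||]; case: z => [b||] /=; split; try tauto.
- by move=> [ab ne] ba; apply: ne; congr ERfin; lra.
- by move=> ba; split; [lra|case; lra].
all: by move=> _; split=> //; discriminate.
Qed.

Lemma ER_plus_mono x x' z z' : ER_le x x' -> ER_le z z' ->
  ER_le (ER_plus x z) (ER_plus x' z').
Proof.
by case: x => [a||]; case: x' => [a'||]; case: z => [b||]; case: z' => [b'||] //=; lra.
Qed.

Lemma ER_scal0 x : ER_scal 0 x = ERfin 0.
Proof. by case: x => [a||] /=; [rewrite Rmult_0_l | case: Req_EM_T..]. Qed.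

Lemma ER_scal_mono c x x' : 0 <= c -> ER_le x x' -> ER_le (ER_scal c x) (ER_scal c x').
Proof.
move=> c_ge0; case: x => [a||]; case: x' => [a'||] //= xx';
  repeat case: Req_EM_T => ? //=; repeat case: Rlt_dec => ? //=; nra.
Qed.

Lemma ER_sumI_mono n (f g : 'I_n -> ER) :
  (forall j, ER_le (f j) (g j)) -> ER_le (ER_sumI f) (ER_sumI g).
Proof.
move=> fg; rewrite /ER_sumI; elim: (enum 'I_n) => [|j s IH] /=; first lra.
exact: ER_plus_mono.
Qed.

Lemma ER_sumI_fin n (f : 'I_n -> ER) (g : 'I_n -> R) :
  (forall j, f j = ERfin (g j)) -> ER_sumI f = ERfin (sumI g).
Proof.
by move=> fg; rewrite /ER_sumI /sumI; elim: (enum 'I_n) => [|j s /= ->]; rewrite ?fg.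
Qed.

Section Bellman.
Variables (M : nat) (T : 'I_M.+1 -> Type).
Variables (A : (forall k, T k) -> 'I_M.+1 -> 'I_M.+1 -> R)
          (y : (forall k, T k) -> 'I_M.+1 -> R).
Hypothesis H3A : H3 A.

Lemma Mterm_mono (X X' : 'I_M.+1 -> ER) P i :
  (forall j, j = i \/ A P i j <> 0 -> ER_le (X j) (X' j)) ->
  ER_le (Mterm A y X P i) (Mterm A y X' P i).
Proof.
move=> XX'; rewrite /Mterm; case: Rlt_dec => [//|nsdd_i].
have [Z_AP [_ [_ diag_le1]]] := H3A P.
have aii_le1 : A P i i <= 1 by apply: diag_le1.
apply: ER_plus_mono; first by apply: ER_scal_mono; [lra | apply: XX'; left].
apply: ER_plus_mono; last exact: ER_le_refl.
apply: ER_sumI_mono => j; case: eqP => ji; first exact: ER_le_refl.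
case: (Req_EM_T (A P i j) 0) => [aij0|aij_neq0].
  by rewrite aij0 Ropp_0 !ER_scal0; apply: ER_le_refl.
apply: ER_scal_mono; last by apply: XX'; right.
by have := Z_AP i j (not_eq_sym ji); lra.
Qed.

Lemma Mterm_fin (V : 'I_M.+1 -> R) P i : ~ sdd_row (A P) i ->
  Mterm A y (fun j => ERfin (V j)) P i = ERfin (V i + residual A y V P i).
Proof.
move=> not_sdd; rewrite /Mterm; case: Rlt_dec => [/not_sdd [] | nsdd].
rewrite (@ER_sumI_fin _ _ (fun j => if j == i then 0 else - A P i j * V j)); last first.
  by move=> j; case: (j == i).
rewrite /residual (sumI_split (fun j => A P i j * V j) i) /=.
rewrite (sumI_ext (g := fun j => - (if j == i then 0 else A P i j * V j))).
  by rewrite sumI_opp; congr ERfin; ring.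
by move=> j; case: (j == i); ring.
Qed.

Lemma Mterm_le_Mop X P i : ER_le (Mterm A y X P i) (Mop A y X i).
Proof. by apply: (proj1 (ER_sup_spec _)); exists P. Qed.

Lemma Mop_le X i b : (forall P, ER_le (Mterm A y X P i) b) -> ER_le (Mop A y X i) b.
Proof. by move=> le_b; apply: (proj2 (ER_sup_spec _)) => _ [P ->]. Qed.

Variable U : 'I_M.+1 -> R.
Hypothesis solU : bellman_solution A y U.
Local Notation UE := (fun j => ERfin (U j)).

Lemma residual_le0 P i : residual A y U P i <= 0.
Proof. by apply: (proj1 (solU i)); exists P. Qed.

Lemma residual_near_sup i d : 0 < d -> exists P, - d < residual A y U P i.
Proof.
move=> d_gt0; apply: NNPP => far.
suff : 0 <= - d by lra.
apply: (proj2 (solU i)) => _ [P ->]; apply: Rnot_lt_le => near; apply: far.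
by exists P.
Qed.

Lemma Mterm_le_U P i : ER_le (Mterm A y UE P i) (UE i).
Proof.
have [sdd_i|nsdd_i] := classic (sdd_row (A P) i).
  by rewrite /Mterm; case: Rlt_dec.
by rewrite Mterm_fin //=; have := residual_le0 P i; lra.
Qed.

Lemma Miter_le_U k j : ER_le (Miter A y k UE j) (UE j).
Proof.
elim: k j => [|k IH] j; first exact: ER_le_refl.
apply: Mop_le => P; apply: ER_le_trans (Mterm_le_U P j).
by apply: Mterm_mono => l _; apply: IH.
Qed.

Definition Miter_drops k i := ER_lt (Miter A y k UE i) (UE i).

Hypothesis H4Ay : H4 A y.

Lemma Miter_drops_eventually i : exists k, Miter_drops k i.
Proof.
have [m1 [m2 [_ drop]]] := H4Ay U i.
exists m2; apply/ER_lt_nle => le_m2; move/ER_lt_nle: drop; apply.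
exact: ER_le_trans (Miter_le_U m1 i) le_m2.
Qed.

Lemma drop_level_ex : exists lv : 'I_M.+1 -> nat, forall i,
  Miter_drops (lv i) i /\ forall k, Miter_drops k i -> (lv i <= k)%nat.
Proof.
apply: (choice (fun i l =>
  Miter_drops l i /\ forall k, Miter_drops k i -> (l <= k)%nat)) => i.
have [l [[drop_l least_l] _]] := Wf_nat.dec_inh_nat_subset_has_unique_least_element
  _ (fun k => classic (Miter_drops k i)) (Miter_drops_eventually i).
by exists l; split=> // k /least_l /ssrnat.leP.
Qed.

Variable lv : 'I_M.+1 -> nat.
Hypothesis lv_least : forall i,
  Miter_drops (lv i) i /\ forall k, Miter_drops k i -> (lv i <= k)%nat.

(* Below its level [lv j], the iterate at [j] still equals [U j]; a row that
   sees no column of lower level therefore sees only undropped values. *)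
Lemma unchained_residual_le P i : ~ sdd_row (A P) i ->
  (forall j, A P i j <> 0 -> (lv i <= lv j)%nat) ->
  ER_le (ERfin (U i + residual A y U P i)) (Miter A y (lv i) UE i).
Proof.
move=> nsdd_i unchained; have [drop_i _] := lv_least i.
case Elv: (lv i) drop_i => [|k] drop_i.
  by move/ER_lt_nle: drop_i; case; apply: ER_le_refl.
rewrite -Mterm_fin //; apply: ER_le_trans (Mterm_le_Mop _ _ _).
apply: Mterm_mono => j seen_j; apply: NNPP => /ER_lt_nle /(proj2 (lv_least j)) le_jk.
have le_ij : (lv i <= lv j)%nat by case: seen_j => [->|/unchained].
by move: (leq_trans le_ij le_jk); rewrite Elv ltnn.
Qed.

Lemma chain_gap i : exists e, 0 < e /\ forall P, ~ sdd_row (A P) i ->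
  - e < residual A y U P i -> exists2 j, A P i j <> 0 & (lv j < lv i)%nat.
Proof.
have [drop_i _] := lv_least i.
have bound P : ~ sdd_row (A P) i -> ~ (exists2 j, A P i j <> 0 & (lv j < lv i)%nat) ->
    ER_le (ERfin (U i + residual A y U P i)) (Miter A y (lv i) UE i).
  move=> nsdd_i nochain; apply: unchained_residual_le => // j aij_neq0.
  by rewrite leqNgt; apply/negP => lt_ji; apply: nochain; exists j.
move: drop_i bound; rewrite /Miter_drops.
case: (Miter A y (lv i) UE i) => [z||] /ER_lt_nle /= drop_i bound.
- exists (U i - z); split; first lra.
  move=> P nsdd_i near; apply: NNPP => /(bound P nsdd_i) /=; lra.
- by case: drop_i.
- by exists 1; split=> [|P nsdd_i _]; [lra | apply: NNPP => /(bound P nsdd_i)].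
Qed.

End Bellman.

Lemma row_decoupled_diag M (T : 'I_M.+1 -> Type)
    (A : (forall k, T k) -> 'I_M.+1 -> 'I_M.+1 -> R)
    (y : (forall k, T k) -> 'I_M.+1 -> R) (Q : 'I_M.+1 -> forall k, T k) i :
  row_decoupled A y ->
  A (fun k => Q k k) i = A (Q i) i /\
  (forall U, residual A y U (fun k => Q k k) i = residual A y U (Q i) i).
Proof.
move=> dec; have [Ai yi] := dec (fun k => Q k k) (Q i) i erefl.
have Ai_eq := functional_extensionality _ _ Ai.
by split=> // U; rewrite /residual yi Ai_eq.
Qed.

Lemma Un_cv_squeeze0 (u : nat -> R) :
  (forall l, - / INR l.+1 < u l <= 0) -> Un_cv u 0.
Proof.
move=> u_bounds eps eps_gt0.
have [N [invN_lt N_gt0]] := archimed_cor1 eps eps_gt0.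
exists N => l le_Nl; rewrite /R_dist Rminus_0_r.
have [lo hi] := u_bounds l; rewrite Rabs_left1 //.
suff : / INR l.+1 <= / INR N by lra.
apply: Rinv_le_contravar; first exact: lt_0_INR.
by apply: le_INR; lia.
Qed.

Theorem lemma3p9 (M : nat) (T : 'I_M.+1 -> Type)
  (Tne : forall i, inhabited (T i))
  (A : (forall k, T k) -> 'I_M.+1 -> 'I_M.+1 -> R)
  (y : (forall k, T k) -> 'I_M.+1 -> R)
  (Hdec : row_decoupled A y)
  (HH3 : H3 A) (HH4 : H4 A y)
  (U : 'I_M.+1 -> R) (HU : bellman_solution A y U) :
  exists Pseq : nat -> (forall k, T k),
    (forall i, Un_cv (fun l => residual A y U (Pseq l) i) 0) /\
    (forall l, nonsingular_M_matrix (A (Pseq l))).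
Proof.
have [lv lv_least] := drop_level_ex HH3 HU HH4.
have [e gap] := choice _ (chain_gap HH3 lv_least).
have tol_pos l i : 0 < Rmin (e i) (/ INR l.+1).
  by apply: Rmin_pos; [case: (gap i) | apply/Rinv_0_lt_compat/lt_0_INR; lia].
have [Q near] := choice _ (fun l => choice _ (fun i => residual_near_sup HU i (tol_pos l i))).
(* [Q l i] is only nearly optimal in row [i]; row-decoupling glues these rows. *)
exists (fun l k => Q l k k); split=> [i|l].
  apply: Un_cv_squeeze0 => l; have [_ ->] := row_decoupled_diag (Q l) i Hdec.
  split; last exact: residual_le0 HU _ _.
  by have := near l i; have := Rmin_r (e i) (/ INR l.+1); lra.
have [Z_A [wdd_A [diag_ge0 _]]] := HH3 (fun k => Q l k k).
apply: (chain_M_matrix Z_A wdd_A diag_ge0 (lv := lv)) => i.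
have [A_diag _] := row_decoupled_diag (Q l) i Hdec.
have [sdd_i|nsdd_i] := classic (sdd_row (A (fun k => Q l k k)) i); first by left.
right; have [_ chain] := gap i; rewrite A_diag.
apply: (chain (Q l i)); first by rewrite /sdd_row /offdiag_abs_sum -A_diag.
by have := near l i; have := Rmin_l (e i) (/ INR l.+1); lra.
Qed.
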